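(* Let $v$ and $v'$ be distinct true twin vertices of a graph $G$ and let $G'=G-v'$. Then $\tilde\gamma_{gr}^{\times 2}(G')\le\tilde\gamma_{gr}^{\times 2}(G)\le\tilde\gamma_{gr}^{\times 2}(G')+1$. Moreover, $\tilde\gamma_{gr}^{\times 2}(G)=\tilde\gamma_{gr}^{\times 2}(G')+1$ if and only if there exists an MDNS $S'$ of $G'$ such that $v\in\widehat{S'}$, $N_{S'}^1[v]\neq\emptyset$, and $N_{S'}[x]\setminus N_{S'}^1[v]\neq\emptyset$ for every $x\in\widehat{S'}\setminus\{v\}$.
   Context: Graphs are finite, simple, undirected; $N[v]$ is the closed neighborhood; $v,v'$ are true twins if $N[v]=N[v']$. A sequence $S=(v_1,\dots,v_k)$ of distinct vertices is a double neighborhood sequence (DNS) if for each $i$ some $u\in N[v_i]$ satisfies $|\{j<i: u\in N[v_j]\}|\le 1$. An MDNS is a DNS of maximum length; $\tilde\gamma_{gr}^{\times 2}(G)$ is that length. $\widehat S$ is the set of vertices of $S$. For a DNS $S=(v_1,\dots,v_k)$: $N_S^1[v_i]=N[v_i]\setminus\bigcup_{j<i}N[v_j]$; $N_S^2[v_i]=\{w\in N[v_i]: |\{j<i: w\in N[v_j]\}|=1\}$; $N_S[v_i]=N_S^1[v_i]\cup N_S^2[v_i]$. *)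

From mathcomp Require Import all_boot.
Set Implicit Arguments. Unset Strict Implicit. Unset Printing Implicit Defensive.

(* The graph G is (e, setT); the vertex-deleted graph G - v' is the induced
   subgraph (e, setT :\ v'). *)

Definition simple_graph (T : finType) (e : rel T) :=
  symmetric e /\ irreflexive e.

Section DNS.
Variables (T : finType) (e : rel T) (V : {set T}).

Definition cnbh (x : T) : {set T} := [set u in V | (u == x) || e x u].

(* number of j < i with u in N[v_j], given the prefix (v_1..v_{i-1}) *)
Definition ncov (prefix : seq T) (u : T) : nat :=
  count (fun y => u \in cnbh y) prefix.

Definition dns_step (prefix : seq T) (x : T) : bool :=
  [exists u in cnbh x, ncov prefix u <= 1].

Definition is_dns (s : seq T) : bool :=
  [&& uniq s, all (fun x => x \in V) s &
      [forall i : 'I_(size s), dns_step (take i s) (tnth (in_tuple s) i)]].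

Definition gr2 : nat :=
  \max_(n < #|T|.+1 | [exists t : n.-tuple T, is_dns t]) n.

Definition is_mdns (s : seq T) : bool := is_dns s && (size s == gr2).

Definition NS1 (s : seq T) (x : T) : {set T} :=
  [set w in cnbh x | ncov (take (index x s) s) w == 0].
Definition NS2 (s : seq T) (x : T) : {set T} :=
  [set w in cnbh x | ncov (take (index x s) s) w == 1].
Definition NS (s : seq T) (x : T) : {set T} := NS1 s x :|: NS2 s x.

End DNS.

From mathcomp Require Import all_boot perm zify.
Set Implicit Arguments. Unset Strict Implicit. Unset Printing Implicit Defensive.

(* Since N[v] = N[v'], swapping v and v' preserves double neighbourhood
   sequences of G, and any witness v' of a step can be replaced by v; so the
   DNSs of G avoiding v' are exactly the DNSs of G' = G - v'.  Deleting v'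
   from an MDNS of G then gives both inequalities.  If gr2(G) = gr2(G') + 1,
   every MDNS of G contains both twins; after possibly exchanging them, moving
   v next to v' gives an MDNS p ++ v :: v' :: q.  Finally, inserting v' right
   after v in a DNS S' = p ++ v :: q of G' yields a DNS of G exactly when the
   step of v' has a witness, i.e. N^1_S'[v] is nonempty, and every x after v
   keeps a witness not covered twice by the pair v, v', i.e.
   N_S'[x] \ N^1_S'[v] is nonempty; for x before v this is automatic. *)

Section DoubleNeighbourhoodSequences.
Variables (T : finType) (e : rel T).
Implicit Types (V W : {set T}) (a b c l s : seq T) (x y u w : T).

Definition before s y := take (index y s) s.

Lemma before_cat_l a b y : y \in a -> before (a ++ b) y = before a y.
Proof. by move=> ya; rewrite /before index_cat ya take_cat index_mem ya. Qed.

Lemma before_cat_r a b y : y \notin a -> before (a ++ b) y = a ++ before b y.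
Proof.
by move=> ya; rewrite /before index_cat (negbTE ya) take_cat ltnNge leq_addr addKn.
Qed.

Lemma before_cat_uniq s a b y :
  s = a ++ b -> uniq s -> y \in b -> before s y = a ++ before b y.
Proof.
move=> ->; rewrite cat_uniq => /and3P[_ /hasPn ab _] yb; exact/before_cat_r/ab.
Qed.

Lemma before_split s a b y : s = a ++ y :: b -> uniq s -> before s y = a.
Proof.
by move=> sE us; rewrite (before_cat_uniq sE us (mem_head y b)) /before /= eqxx cats0.
Qed.

Lemma rem_split a b x : x \notin a -> rem x (a ++ x :: b) = a ++ b.
Proof.
elim: a => /= [|z a IH]; first by rewrite eqxx.
by rewrite inE negb_or => /andP[xz /IH ->]; rewrite eq_sym (negbTE xz).
Qed.

Lemma split_two_mem s x y : x != y -> x \in s -> y \in s -> exists a b c,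
  s = a ++ x :: b ++ y :: c \/ s = a ++ y :: b ++ x :: c.
Proof.
move=> xy; elim: s => //= z s IH; rewrite !inE.
have [<-|xz] /= := eqVneq x z.
  by move=> _; rewrite eq_sym (negbTE xy) => /splitPr[b c]; exists [::], b, c; left.
have [<-|yz] /= := eqVneq y z.
  by move=> /splitPr[b c] _; exists [::], b, c; right.
by move=> /IH h /h[a [b [c [->|->]]]]; exists (z :: a), b, c; [left|right].
Qed.

Lemma before_filter (P : pred T) s y :
  P y -> before (filter P s) y = filter P (before s y).
Proof.
rewrite /before => Py; elim: s => //= z s IH.
case: (eqVneq z y) => [->|zy]; first by rewrite Py /= eqxx.
by case Pz: (P z) => /=; rewrite ?(negbTE zy) ?eq_sym ?(negbTE zy) /= ?Pz ?IH.
Qed.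

(* N_S[x] and N^1_S[x] of the paper, with the part of S preceding x given as l *)
Definition NSp V l x := [set w in cnbh e V x | ncov e V l w <= 1].
Definition NS1p V l x := [set w in cnbh e V x | ncov e V l w == 0].

Lemma mem_NSp V l x w : (w \in NSp V l x) = (w \in cnbh e V x) && (ncov e V l w <= 1).
Proof. by rewrite !inE. Qed.

Lemma mem_NS1p V l x w : (w \in NS1p V l x) = (w \in cnbh e V x) && (ncov e V l w == 0).
Proof. by rewrite !inE. Qed.

Lemma NS1E V s x : NS1 e V s x = NS1p V (before s x) x.
Proof. by []. Qed.

Lemma NSE V s x : NS e V s x = NSp V (before s x) x.
Proof.
apply/setP => w; rewrite /NSp /before !inE -andb_orr.
by case: (ncov _ _ _ _) => [|[|n]]; rewrite ?andbT.
Qed.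

Lemma NS1p_subset V l x : NS1p V l x \subset NSp V l x.
Proof. by apply/subsetP => w; rewrite !inE => /andP[-> /eqP->]. Qed.

Lemma dns_stepE V l x : dns_step e V l x = (NSp V l x != set0).
Proof. by apply/existsP/set0Pn => -[w wP]; exists w; rewrite /NSp in_set in wP *. Qed.

Lemma is_dnsE V s : is_dns e V s =
  [&& uniq s, all (fun x => x \in V) s & all (fun y => dns_step e V (before s y) y) s].
Proof.
rewrite /is_dns; case us: (uniq s) => //=; case: (all _ s) => //=.
apply/forallP/allP => [step y ys|step i].
  have := step (Ordinal (etrans (index_mem y s) ys)).
  by rewrite (tnth_nth y) /= nth_index.
rewrite (tnth_nth (tnth (in_tuple s) i)) /=.
have := step _ (mem_nth (tnth (in_tuple s) i) (ltn_ord i)).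
by rewrite /before index_uniq.
Qed.

Lemma ncov_cat V a b u : ncov e V (a ++ b) u = ncov e V a u + ncov e V b u.
Proof. exact: count_cat. Qed.

Lemma cnbh_restrict V W y : V \subset W -> cnbh e V y = V :&: cnbh e W y.
Proof.
move=> sVW; apply/setP => u; rewrite !inE.
by case uV: (u \in V); rewrite ?(subsetP sVW u uV).
Qed.

Lemma ncov_restrict V W l u : V \subset W -> u \in V -> ncov e V l u = ncov e W l u.
Proof.
by move=> sVW uV; apply: eq_count => y; rewrite /= (cnbh_restrict y sVW) inE uV.
Qed.

Lemma NSp_restrict V W l x : V \subset W -> NSp V l x = V :&: NSp W l x.
Proof.
move=> sVW; apply/setP => u; rewrite /NSp (cnbh_restrict x sVW) !inE.
by case uV: (u \in V); rewrite // (ncov_restrict l sVW uV).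
Qed.

Lemma NS1p_restrict V W l x : V \subset W -> NS1p V l x = V :&: NS1p W l x.
Proof.
move=> sVW; apply/setP => u; rewrite /NS1p (cnbh_restrict x sVW) !inE.
by case uV: (u \in V); rewrite // (ncov_restrict l sVW uV).
Qed.

Lemma dns_stepS V W l x : V \subset W -> dns_step e V l x -> dns_step e W l x.
Proof.
move=> sVW; rewrite !dns_stepE (NSp_restrict _ _ sVW).
by apply: contraNneq => ->; rewrite setI0.
Qed.

Lemma is_dnsS V W s : V \subset W -> is_dns e V s -> is_dns e W s.
Proof.
move=> sVW; rewrite !is_dnsE => /and3P[-> inV steps] /=; apply/andP; split.
  by apply: sub_all inV => y /(subsetP sVW).
by apply: sub_all steps => y; apply: dns_stepS.
Qed.

Lemma NSp_subseq V l l' x : subseq l' l -> NSp V l x \subset NSp V l' x.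
Proof.
move=> sub; apply/subsetP => w; rewrite !inE => /andP[-> le1].
exact: leq_trans (leq_count_subseq _ sub) le1.
Qed.

Lemma dns_step_subseq V l l' x : subseq l' l -> dns_step e V l x -> dns_step e V l' x.
Proof.
move=> sub; rewrite !dns_stepE => /set0Pn[w wN]; apply/set0Pn.
by exists w; apply: (subsetP (NSp_subseq V x sub)).
Qed.

Lemma NSp_perm V l l' x : perm_eq l l' -> NSp V l x = NSp V l' x.
Proof. by move=> pll'; apply/setP => w; rewrite !inE /ncov (seq.permP pll'). Qed.

Lemma dns_step_perm V l l' x : perm_eq l l' -> dns_step e V l x = dns_step e V l' x.
Proof. by move=> pll'; rewrite !dns_stepE (NSp_perm _ _ pll'). Qed.

Lemma dns_filter V (P : pred T) s : is_dns e V s -> is_dns e V (filter P s).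
Proof.
rewrite !is_dnsE => /and3P[us inV steps]; rewrite filter_uniq //= all_filter.
apply/andP; split; first by apply: sub_all inV => y yV; apply/implyP.
apply/allP => y; rewrite mem_filter => /andP[Py ys]; rewrite before_filter //.
exact: dns_step_subseq (filter_subseq P _) (allP steps y ys).
Qed.

Lemma dns_rem V x s : is_dns e V s -> is_dns e V (rem x s).
Proof. by move=> dnss; case/and3P: (dnss) => us _ _; rewrite rem_filter ?dns_filter. Qed.

Lemma dns_size_le_gr2 V s : is_dns e V s -> size s <= gr2 e V.
Proof.
move=> dnss; have /and3P[us _ _] := dnss; rewrite is_dnsE in dnss.
have lt_s : size s < #|T|.+1 by rewrite ltnS -(card_uniqP us) max_card.
apply: (@leq_bigmax_cond _ _ (fun i : 'I_#|T|.+1 => nat_of_ord i) (Ordinal lt_s)).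
by apply/existsP; exists (in_tuple s); rewrite is_dnsE.
Qed.

Lemma exists_mdns V : exists s, is_mdns e V s.
Proof.
have dns0 : [exists t : (@ord0 #|T|).-tuple T, is_dns e V t].
  by apply/existsP; exists [tuple]; rewrite is_dnsE.
rewrite /is_mdns /gr2 (bigmax_eq_arg ord0) //.
case: arg_maxnP => // i /existsP[t dnst] _.
by exists t; rewrite dnst size_tuple /=.
Qed.

Lemma gr2S V W : V \subset W -> gr2 e V <= gr2 e W.
Proof.
move=> sVW; have [s /andP[dnss /eqP <-]] := exists_mdns V.
exact/dns_size_le_gr2/(is_dnsS sVW).
Qed.

Lemma NS_setD_NS1_before V s x y : is_dns e V s -> x \in before s y ->
  NS e V s x :\: NS1 e V s y != set0.
Proof.
rewrite is_dnsE => /and3P[_ _ steps] xy.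
have := allP steps x (mem_take xy); rewrite dns_stepE => /set0Pn[w wN].
apply/set0Pn; exists w; rewrite inE NSE wN andbT NS1E inE negb_and -lt0n -has_count.
by apply/orP; right; apply/hasP; exists x; move: wN; rewrite inE => /andP[].
Qed.

Lemma dns_map V (f : T -> T) s : injective f -> {homo f : y / y \in V} ->
  (forall y, cnbh e V (f y) = cnbh e V y) -> is_dns e V s -> is_dns e V (map f s).
Proof.
move=> finj fV fN; have ncov_map l u : ncov e V (map f l) u = ncov e V l u.
  by rewrite /ncov count_map; apply: eq_count => z /=; rewrite fN.
rewrite !is_dnsE (map_inj_uniq finj) !all_map => /and3P[-> inV steps] /=.
apply/andP; split; first by apply: sub_all inV => y /fV.
apply: sub_all steps => y /=; rewrite /before index_map // -map_take !dns_stepE.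
by congr (_ != set0); apply/setP => w; rewrite /NSp fN !in_set ncov_map.
Qed.

Lemma NSp_cons_twin V l x x' : cnbh e V x = cnbh e V x' -> NSp V (x :: l) x' = NS1p V l x.
Proof.
move=> xx'; apply/setP => w; rewrite mem_NSp mem_NS1p -xx' /ncov /=.
by case: (w \in cnbh e V x) => /=; lia.
Qed.

Lemma dns_step_twin_cons V l x x' : cnbh e V x = cnbh e V x' ->
  dns_step e V (x :: l) x' -> dns_step e V l x.
Proof.
move=> xx'; rewrite !dns_stepE (NSp_cons_twin _ xx') => /set0Pn[w wN].
by apply/set0Pn; exists w; apply: (subsetP (NS1p_subset V l x)).
Qed.

Lemma NSp_cat_twins V a b x x' y : cnbh e V x = cnbh e V x' ->
  NSp V (a ++ x :: x' :: b) y = NSp V (a ++ x :: b) y :\: NS1p V a x.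
Proof.
move=> xx'; apply/setP => w; rewrite in_setD !mem_NSp mem_NS1p !ncov_cat /ncov /= -xx'.
by case: (w \in cnbh e V x); case: (w \in cnbh e V y) => /=; lia.
Qed.

Lemma dns_move_twin V a b c x x' : cnbh e V x = cnbh e V x' ->
  is_dns e V (a ++ x :: b ++ x' :: c) -> is_dns e V (a ++ b ++ x :: x' :: c).
Proof.
set S := a ++ _; set S2 := a ++ _ => xx'.
have pS : perm_eq S S2 by rewrite perm_cat2l -cat1s perm_catCA.
rewrite !is_dnsE => /and3P[uS inV steps].
have uS2 : uniq S2 by rewrite -(perm_uniq pS).
have step_x' : dns_step e V (a ++ x :: b) x'.
  have := allP steps x'; rewrite (@before_split S (a ++ x :: b) c) -?catA // => -> //.
  by rewrite /S !(mem_cat, inE) eqxx !orbT.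
have move_x : perm_eq (a ++ x :: b) (x :: a ++ b) by rewrite (perm_catCA a [:: x] b).
have move_x_last : perm_eq (a ++ x :: b) (a ++ b ++ [:: x]).
  by rewrite perm_cat2l -cat1s perm_catC.
have move_x_before_c : perm_eq (a ++ x :: b ++ [:: x']) (a ++ b ++ [:: x; x']).
  by rewrite perm_cat2l (perm_catCA [:: x] b).
rewrite uS2 -(perm_all _ pS) inV /=; apply/allP => y yS2.
have := allP steps y (etrans (perm_mem pS y) yS2).
move: yS2; rewrite !(mem_cat, inE) => /orP[ya|/orP[yb|/orP[/eqP->|/orP[/eqP->|yc]]]].
- by rewrite /S /S2 before_cat_l // before_cat_l.
- rewrite (before_cat_uniq (catA a [:: x] _) uS) ?mem_cat ?yb // before_cat_l //.
  rewrite (before_cat_uniq (erefl S2) uS2) ?mem_cat ?yb // before_cat_l //.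
  by apply: dns_step_subseq; rewrite -catA cat_subseq ?subseq_cons.
- move=> _; rewrite (before_split (catA a b _) uS2).
  by rewrite (dns_step_perm _ _ move_x) in step_x'; apply: dns_step_twin_cons step_x'.
- move=> _; rewrite (@before_split S2 (a ++ b ++ [:: x]) c) -?catA //.
  by rewrite -(dns_step_perm _ _ move_x_last).
- rewrite (@before_cat_uniq S (a ++ x :: b ++ [:: x']) c) //; last first.
    by rewrite /S -catA /= -[(b ++ _) ++ c]catA.
  rewrite (@before_cat_uniq S2 (a ++ b ++ [:: x; x']) c) //; last by rewrite /S2 -!catA.
  by rewrite (dns_step_perm _ _ (perm_cat move_x_before_c (perm_refl (before c y)))).
Qed.

Lemma mdns_move_twin V a b c x x' : cnbh e V x = cnbh e V x' ->
  is_mdns e V (a ++ x :: b ++ x' :: c) -> is_mdns e V (a ++ b ++ x :: x' :: c).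
Proof.
move=> xx' /andP[/(dns_move_twin xx') dnsS2 /eqP sizeS].
by rewrite /is_mdns dnsS2 -sizeS !size_cat /= !size_cat /= addnS.
Qed.

End DoubleNeighbourhoodSequences.

Section TrueTwins.
Variables (T : finType) (e : rel T) (v v' : T).
Hypotheses (e_sym : symmetric e) (vv' : v != v').
Hypothesis twins : cnbh e [set: T] v = cnbh e [set: T] v'.
Local Notation G := [set: T].
Local Notation G' := (G :\ v').
Implicit Types (l m p q s : seq T) (x y : T).

Lemma mem_cnbh_twin y : (v' \in cnbh e G y) = (v \in cnbh e G y).
Proof.
have cnbh_sym u z : (u \in cnbh e G z) = (z \in cnbh e G u) by rewrite !inE eq_sym e_sym.
by rewrite cnbh_sym -twins cnbh_sym.
Qed.

Lemma ncov_twin l : ncov e G l v' = ncov e G l v.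
Proof. by apply: eq_count => y; rewrite /= mem_cnbh_twin. Qed.

Lemma mem_NSp_twin l x : (v' \in NSp e G l x) = (v \in NSp e G l x).
Proof. by rewrite !mem_NSp mem_cnbh_twin ncov_twin. Qed.

Lemma mem_NS1p_twin l x : (v' \in NS1p e G l x) = (v \in NS1p e G l x).
Proof. by rewrite !mem_NS1p mem_cnbh_twin ncov_twin. Qed.

Lemma setD1_twin_neq0 (X : {set T}) :
  (v' \in X) = (v \in X) -> (X :\ v' != set0) = (X != set0).
Proof.
move=> Xv; apply/set0Pn/set0Pn => [[w /setD1P[_ wX]]|[w wX]]; first by exists w.
have [wv'|wv'] := eqVneq w v'; last by exists w; apply/setD1P.
by exists v; apply/setD1P; rewrite vv' -Xv -wv'.
Qed.

Lemma NSp_delete l x : NSp e G' l x = NSp e G l x :\ v'.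
Proof. by rewrite (NSp_restrict e l x (subsetT G')) setTD setIC -setDE. Qed.

Lemma NS1p_delete l x : NS1p e G' l x = NS1p e G l x :\ v'.
Proof. by rewrite (NS1p_restrict e l x (subsetT G')) setTD setIC -setDE. Qed.

Lemma dns_step_delete l x : dns_step e G' l x = dns_step e G l x.
Proof. by rewrite !dns_stepE NSp_delete setD1_twin_neq0 // mem_NSp_twin. Qed.

Lemma is_dns_delete s : is_dns e G' s = (v' \notin s) && is_dns e G s.
Proof.
have inG' : all (fun x => x \in G') s = (v' \notin s).
  apply/allP/idP => [inG'|v'Ns y ys]; first by apply/negP => /inG'; rewrite !inE eqxx.
  by rewrite !inE andbT; apply: contraNneq v'Ns => <-.
have inG : all (fun x => x \in G) s by apply/allP => y; rewrite in_setT.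
rewrite !is_dnsE (eq_all (fun y => dns_step_delete (before s y) y)) inG inG'.
by rewrite andbCA.
Qed.

Lemma cnbh_tperm y : cnbh e G (tperm v v' y) = cnbh e G y.
Proof. by case: (tpermP v v' y) => [->|->|//]; rewrite twins. Qed.

Lemma mdns_tperm s : is_mdns e G s -> is_mdns e G (map (tperm v v') s).
Proof.
case/andP=> dnss sizes; rewrite /is_mdns size_map sizes andbT.
by apply: dns_map dnss; [exact: perm_inj | move=> y; rewrite in_setT | exact: cnbh_tperm].
Qed.

Lemma gr2_le_delete_twin : gr2 e G <= (gr2 e G').+1.
Proof.
have [s /andP[dnss /eqP <-]] := exists_mdns e G.
have [v's|v'Ns] := boolP (v' \in s); last first.
  by apply/leqW/dns_size_le_gr2; rewrite is_dns_delete v'Ns.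
apply: leq_trans (leqSpred _) _; rewrite ltnS -(size_rem v's).
apply: dns_size_le_gr2; rewrite is_dns_delete dns_rem // mem_rem_uniqF //.
by case/and3P: dnss.
Qed.

Lemma mdns_mem_twin s : gr2 e G = (gr2 e G').+1 -> is_mdns e G s -> v' \in s.
Proof.
move=> gr2E /andP[dnss /eqP sizes]; have [//|v'Ns] := boolP (v' \in s).
have dns'_s : is_dns e G' s by rewrite is_dns_delete v'Ns.
by have := dns_size_le_gr2 dns'_s; rewrite sizes gr2E ltnn.
Qed.

Lemma mdns_twins_adjacent : gr2 e G = (gr2 e G').+1 ->
  exists p q, is_mdns e G (p ++ v :: v' :: q).
Proof.
move=> gr2E; have [s mdnss] := exists_mdns e G.
set t := tperm v v'; have mdns_ts : is_mdns e G (map t s) := mdns_tperm mdnss.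
have vs : v \in s by rewrite -(mem_map (@perm_inj _ t)) tpermL mdns_mem_twin.
have [a [b [c [sE|sE]]]] := split_two_mem vv' vs (mdns_mem_twin gr2E mdnss).
  by exists (a ++ b), c; rewrite -catA; apply: (mdns_move_twin twins); rewrite -sE.
move: mdns_ts; rewrite sE map_cat /= map_cat /= tpermL tpermR => mdns_ts.
by exists (map t a ++ map t b), (map t c); rewrite -catA; apply: (mdns_move_twin twins).
Qed.

Lemma dns_step_next_twin l : dns_step e G (rcons l v) v' = (NS1p e G' l v != set0).
Proof.
rewrite dns_stepE (NSp_perm e _ _ (permEl (perm_rcons v l))) NSp_cons_twin //.
by rewrite NS1p_delete setD1_twin_neq0 // mem_NS1p_twin.
Qed.

Lemma dns_step_after_twins l m y : dns_step e G (l ++ v :: v' :: m) y =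
  (NSp e G' (l ++ v :: m) y :\: NS1p e G' l v != set0).
Proof.
rewrite dns_stepE NSp_cat_twins // NSp_delete NS1p_delete.
have -> : (NSp e G (l ++ v :: m) y :\ v') :\: (NS1p e G l v :\ v') =
          (NSp e G (l ++ v :: m) y :\: NS1p e G l v) :\ v'.
  by apply/setP => w; rewrite !in_setD !in_set1; case: (w == v').
by rewrite setD1_twin_neq0 // !in_setD mem_NSp_twin mem_NS1p_twin.
Qed.

Lemma dns_insert_twinP p q :
  is_dns e G (p ++ v :: v' :: q) <->
  [/\ is_dns e G' (p ++ v :: q), NS1 e G' (p ++ v :: q) v != set0 &
      forall x, x \in p ++ v :: q -> x != v ->
        NS e G' (p ++ v :: q) x :\: NS1 e G' (p ++ v :: q) v != set0].
Proof.
set S := p ++ _; set S' := p ++ _.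
have uSE : uniq S = (v' \notin S') && uniq S'.
  by rewrite /S -[p ++ _]/(p ++ [:: v] ++ [:: v'] ++ q) catA uniq_catCA /= -catA.
have befores : uniq S -> [/\ before S v = p, before S' v = p, before S v' = rcons p v,
    {in p, forall y, before S y = before S' y} &
    {in q, forall y, before S y = p ++ v :: v' :: before q y /\
                     before S' y = p ++ v :: before q y}].
  move=> uS; have uS' : uniq S' by move: uS; rewrite uSE => /andP[].
  split=> [||||y yq].
  - exact: before_split (erefl S) uS.
  - exact: before_split (erefl S') uS'.
  - exact: before_split (esym (cat_rcons v p _)) uS.
  - by move=> y yp; rewrite !before_cat_l.
  rewrite (before_cat_uniq (catA p [:: v; v'] q) uS yq).
  by rewrite (before_cat_uniq (catA p [:: v] q) uS' yq) -!catA.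
split=> [dnsS | [dnsS' NS1v NSv]].
  have := dnsS; rewrite is_dnsE uSE => /and3P[/andP[v'S' uS'] _ /allP stepS].
  have uS : uniq S by rewrite uSE v'S'.
  have [bSv bS'v bSv' _ bq] := befores uS.
  have dnsS' : is_dns e G' S'.
    have v'pv : v' \notin rcons p v.
      apply: contra v'S'; rewrite mem_rcons !(mem_cat, inE).
      by case/orP=> ->; rewrite ?orbT.
    by rewrite is_dns_delete v'S' /S' -cat_rcons -(rem_split q v'pv) cat_rcons dns_rem.
  split=> // [|x].
    rewrite NS1E bS'v -dns_step_next_twin -bSv' stepS //.
    by rewrite !(mem_cat, inE) eqxx !orbT.
  rewrite mem_cat inE => /orP[xp _|/orP[/eqP-> /[!eqxx]//|xq _]].
    by apply: NS_setD_NS1_before dnsS' _; rewrite bS'v.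
  have [bSx bS'x] := bq x xq.
  rewrite NSE NS1E bS'v bS'x -dns_step_after_twins -bSx stepS //.
  by rewrite !(mem_cat, inE) xq !orbT.
have := dnsS'; rewrite is_dns_delete is_dnsE => /andP[v'S' /and3P[uS' _ /allP stepS']].
have uS : uniq S by rewrite uSE v'S'.
have [bSv bS'v bSv' bp bq] := befores uS.
rewrite is_dnsE uS /=; apply/andP; split; first by apply/allP => y; rewrite in_setT.
apply/allP => y; rewrite !(mem_cat, inE) => /orP[yp|/orP[/eqP->|/orP[/eqP->|yq]]].
- by rewrite bp // stepS' // mem_cat yp.
- by rewrite bSv -bS'v stepS' // mem_cat mem_head orbT.
- by rewrite bSv' dns_step_next_twin -bS'v.
have [bSy bS'y] := bq y yq.
have yv : y != v.
  by apply: contraTneq yq => ->; move: uS'; rewrite cat_uniq => /and3P[_ _ /andP[]].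
by rewrite bSy dns_step_after_twins -bS'y -bS'v -NSE -NS1E NSv // mem_cat inE yq !orbT.
Qed.

End TrueTwins.

Theorem proposition5 (T : finType) (e : rel T) (v v' : T) :
  simple_graph e -> v != v' ->
  cnbh e [set: T] v = cnbh e [set: T] v' ->
  let G' := [set: T] :\ v' in
  [/\ gr2 e G' <= gr2 e [set: T],
      gr2 e [set: T] <= (gr2 e G').+1 &
      gr2 e [set: T] = (gr2 e G').+1 <->
      exists S' : seq T,
        [/\ is_mdns e G' S', v \in S', NS1 e G' S' v != set0 &
            forall x, x \in S' -> x != v ->
              NS e G' S' x :\: NS1 e G' S' v != set0]].
Proof.
move=> [e_sym _] vv' twins G'.
have le_G_G' := gr2_le_delete_twin e_sym vv' twins.
split=> //; first exact: gr2S (subsetT G').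
split=> [gr2E | [S' [/andP[dnsS' /eqP sizeS'] vS' NS1v NSv]]].
  have [p [q /andP[dnsS /eqP sizeS]]] := mdns_twins_adjacent e_sym vv' twins gr2E.
  have [dnsS' NS1v NSv] := (dns_insert_twinP e_sym vv' twins p q).1 dnsS.
  exists (p ++ v :: q); split=> //; last by rewrite mem_cat mem_head orbT.
  by rewrite /is_mdns dnsS' -eqSS -gr2E -sizeS !size_cat /= !addnS.
case/splitPr: vS' => p q in dnsS' sizeS' NS1v NSv *.
have dnsS := (dns_insert_twinP e_sym vv' twins p q).2 (And3 dnsS' NS1v NSv).
apply/eqP; rewrite eqn_leq le_G_G' -sizeS' /=.
by have := dns_size_le_gr2 dnsS; rewrite !size_cat /= addnS.
Qed.
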